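(* Let $a_1,a_2,a_3$ be distinct positive integers and let $m_1,m_2$ be distinct positive integers. Then there exists a permutation $\pi$ of $\{1,2,3\}$ such that $$(a_{\pi(1)}-m_1)(a_{\pi(1)}-m_2)(a_{\pi(1)}+a_{\pi(2)}-m_1)(a_{\pi(1)}+a_{\pi(2)}-m_2)\neq 0.$$ *)

From mathcomp Require Import all_boot all_order all_algebra all_fingroup.

From mathcomp Require Import all_boot all_order all_algebra all_fingroup.
Import Order.TTheory GRing.Theory Num.Theory.
Local Open Scope ring_scope.

(** Write M = {m1, m2} and call an index i blocked when a_i + a_j lies in M
    for both j <> i.  These two sums are distinct, so they are m1 and m2, and
    m1 + m2 = a_i + (a_1 + a_2 + a_3): at most one index is blocked.  Some a_k
    lies outside M since the a_i are distinct.  If k is not blocked we are done.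
    Otherwise some other a_j lies outside M, for if both did then they would
    also sum to m1 + m2, forcing 2 a_k = 0; this j is not blocked. *)

Lemma perm_of_pairs {T : finType} {x1 x2 y1 y2 : T} :
  x1 != x2 -> y1 != y2 -> exists s : {perm T}, s x1 = y1 /\ s x2 = y2.
Proof.
move=> x12 y12; set t := tperm x1 y1.
have tx2_y1 : t x2 != y1 by rewrite -{1}(tpermL x1 y1) (inj_eq perm_inj) eq_sym.
exists (t * tperm (t x2) y2)%g; rewrite !permM tpermL; split=> //.
by rewrite tpermL tpermD // eq_sym.
Qed.

Lemma mulr_subr2_eq0 (R : idomainType) (x m1 m2 : R) :
  ((x - m1) * (x - m2) == 0) = (x \in [:: m1; m2]).
Proof. by rewrite mulf_eq0 !subr_eq0 !inE. Qed.

Lemma sum_ord3_lift {V : nmodType} (F : 'I_3 -> V) (i : 'I_3) :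
  \sum_k F k = F i + F (lift i ord0) + F (lift i ord_max).
Proof.
rewrite (bigD1_ord i) //= big_ord_recl big_ord1 addrA.
by congr (_ + F (lift i _)); apply: val_inj.
Qed.

Section BlockedIndices.

Variables (R : numDomainType) (m1 m2 : R).
Local Notation M := [:: m1; m2].

Lemma add_distinct_mem2 {u v : R} :
  u != v -> u \in M -> v \in M -> u + v = m1 + m2.
Proof.
rewrite !inE => uv /orP[]/eqP uE /orP[]/eqP vE; move: uv.
all: by rewrite uE vE ?eqxx // addrC.
Qed.

Variable a : 'I_3 -> R.
Hypothesis a_inj : injective a.
Hypothesis a_gt0 : forall i, 0 < a i.

Definition blocked (i : 'I_3) := [forall j : 'I_2, a i + a (lift i j) \in M].

Lemma blocked_sum {i} : blocked i -> m1 + m2 = a i + \sum_k a k.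
Proof.
move=> /forallP i_blocked.
have neq_lift2 : a i + a (lift i ord0) != a i + a (lift i ord_max).
  by rewrite (inj_eq (addrI _)) (inj_eq a_inj) (inj_eq lift_inj).
rewrite -(add_distinct_mem2 neq_lift2) // (sum_ord3_lift a i).
by rewrite addrCA.
Qed.

Lemma blocked_inj {i i'} : blocked i -> blocked i' -> i = i'.
Proof. by move=> /blocked_sum sum_i /blocked_sum; rewrite sum_i => /addIr/a_inj. Qed.

Lemma blocked_notin_lift {i} : blocked i -> exists j, a (lift i j) \notin M.
Proof.
move=> i_blocked; apply/existsP; apply: contraT => /existsPn lift_in.
have lift_sum : a (lift i ord0) + a (lift i ord_max) = m1 + m2.
  apply: add_distinct_mem2; rewrite ?(inj_eq a_inj) ?(inj_eq lift_inj) //;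
  exact/negPn/lift_in.
move/blocked_sum: i_blocked; rewrite (sum_ord3_lift a i) -addrA lift_sum addrA.
rewrite -{1}[m1 + m2]add0r => /addIr/eqP.
by rewrite lt_eqF // addr_gt0.
Qed.

Lemma exists_notin_mem2 : exists i, a i \notin M.
Proof.
apply/existsP; apply: contraT => /existsPn all_in.
have: (size (map a (enum 'I_3)) <= size M)%N.
  apply: uniq_leq_size; first by rewrite (map_inj_uniq a_inj) enum_uniq.
  by move=> _ /mapP[i _ ->]; apply/negPn/all_in.
by rewrite size_map size_enum_ord.
Qed.

Lemma exists_pair_avoiding_mem2 :
  exists i j, a i \notin M /\ a i + a (lift i j) \notin M.
Proof.
suff [i ai /forallPn[j aij]] : exists2 i, a i \notin M & ~~ blocked i.
  by exists i, j.
have [k ak] := exists_notin_mem2.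
have [k_blocked|] := boolP (blocked k); last by exists k.
have [j akj] := blocked_notin_lift k_blocked.
exists (lift k j) => //; apply: contra (neq_lift k j).
by move=> /(blocked_inj k_blocked)/eqP.
Qed.

End BlockedIndices.

Theorem theorem1 (a : 'I_3 -> int) (m1 m2 : int)
  (ha_pos : forall i, 0 < a i) (ha_inj : injective a)
  (hm1 : 0 < m1) (hm2 : 0 < m2) (hm : m1 != m2) :
  exists pi : 'S_3,
    (a (pi ord0) - m1) * (a (pi ord0) - m2)
    * (a (pi ord0) + a (pi (lift ord0 ord0)) - m1)
    * (a (pi ord0) + a (pi (lift ord0 ord0)) - m2) != 0.
Proof.
have [i [j [ai aij]]] := @exists_pair_avoiding_mem2 _ m1 m2 _ ha_inj ha_pos.
have [pi [pi0 pi1]] := perm_of_pairs (neq_lift ord0 ord0) (neq_lift i j).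
by exists pi; rewrite pi0 pi1 -mulrA mulf_neq0 // mulr_subr2_eq0.
Qed.
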